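(* Let $\phi(w)=aw+b$ with $a>0$ and $b\in\mathbb{C}$, $\mathrm{Re}(b)\geq 0$, and suppose that either $a=1$ ($\phi$ is of parabolic type or the identity map) or $a\in(1,\infty)$ ($\phi$ is hyperbolic of type II). Then the composition operator $C_{\phi}f=f\circ\phi$ on $H^2(\mathbb{C}_{+})$ is neither positively expansive nor uniformly positively expansive.
   Context: $\mathbb{C}_{+}=\{w\in\mathbb{C}:\mathrm{Re}(w)>0\}$. $H^2(\mathbb{C}_{+})$ is the Hardy space of holomorphic $f$ on $\mathbb{C}_{+}$ with finite norm $\|f\|_2^2=\sup_{0<x<\infty}\frac{1}{\pi}\int_{-\infty}^{\infty}|f(x+iy)|^2\,dy$; $C_\phi$ is bounded on it. An operator $T$ on a Banach space $X$ with unit sphere $S_X$ is positively expansive if for every $z\in S_X$ there is $n\in\mathbb{N}$ with $\|T^nz\|\ge 2$, and uniformly positively expansive if there is $n\in\mathbb{N}$ with $\|T^nz\|\ge2$ for all $z\in S_X$. *)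

From Stdlib Require Import Reals.
From Coquelicot Require Complex Hierarchy Derive.
From mathcomp Require Import all_boot all_order all_algebra.
From mathcomp Require Import all_classical all_reals all_analysis.
From mathcomp Require Import Rstruct Rstruct_topology.

(* Complex numbers: Coquelicot's C = R * R, with C = (Re, Im). *)
Definition CC := Complex.C.

Definition in_rhp (w : CC) : Prop := (0 < fst w)%R.

Definition holomorphic_rhp (f : CC -> CC) : Prop :=
  forall z : CC, in_rhp z ->
    Derive.ex_derive (K := Complex.C_AbsRing) (V := Complex.C_NormedModule) f z.

Definition H2norm2 (f : CC -> CC) : \bar R :=
  ereal_sup [set ((1 / PI)%R%:E *
                  \int[@lebesgue_measure R]_(y in setT)
                     ((Complex.Cmod (f (x, y)) ^+ 2)%R)%:E)%E
            | x in [set x : R | (0 < x)%R]].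

Definition in_H2 (f : CC -> CC) : Prop :=
  holomorphic_rhp f /\ (H2norm2 f < +oo)%E.

(* The Hardy norm ||f||_2 (meaningful for f in H^2). *)
Definition H2norm (f : CC -> CC) : R := sqrt (fine (H2norm2 f)).

Definition affine_map (a : R) (b : CC) (w : CC) : CC :=
  Complex.Cplus (Complex.Cmult (Complex.RtoC a) w) b.

Definition comp_op (phi : CC -> CC) (f : CC -> CC) : CC -> CC :=
  fun w => f (phi w).

Definition positively_expansive (T : (CC -> CC) -> (CC -> CC)) : Prop :=
  forall f : CC -> CC, in_H2 f -> H2norm f = 1%R ->
    exists n : nat, (1 <= n)%N /\ (2 <= H2norm (iter n T f))%R.

Definition uniformly_positively_expansive (T : (CC -> CC) -> (CC -> CC)) : Prop :=
  exists n : nat, (1 <= n)%N /\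
    forall f : CC -> CC, in_H2 f -> H2norm f = 1%R ->
      (2 <= H2norm (iter n T f))%R.

(* Test the kernel f(w) = 1/(w+1), which has unit norm.  For A > 0 and
   Re B = p >= 0, the integral of |f(A w + B)|^2 along the vertical line
   Re w = x is an arctangent integral equal to pi / (A (A x + p + 1)), whence
   ||f o (A w + B)||^2 = 1/(A (p + 1)), at most 1 when A >= 1.  Since
   C_phi^n f = f o phi^n with phi^n(w) = a^n w + B_n, a^n >= 1 and
   Re B_n >= 0, no iterate of f reaches norm 2. *)

From Stdlib Require Import Reals Lra.
From Coquelicot Require Complex Coquelicot.

Section complex_kernel.
Import Coquelicot.Coquelicot.
Local Open Scope R_scope.

Lemma Cmod_sqr (z : C) : Cmod z * Cmod z = fst z * fst z + snd z * snd z.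
Proof. unfold Cmod; rewrite sqrt_sqrt; simpl; [ring | nra]. Qed.

Lemma Cinv_remainder_bound (c h : C) : c <> 0%C -> Cmod h <= Cmod c / 2 ->
  Cmod (/ (c + h) - / c + h * / (c * c))%C
  <= 2 * (Cmod h * Cmod h) / (Cmod c * Cmod c * Cmod c).
Proof.
intros c0 hc.
assert (Hc : 0 < Cmod c) by now apply Cmod_gt_0.
assert (Hch : Cmod c / 2 <= Cmod (c + h)).
{ pose proof (Cmod_triangle (c + h) (- h)) as T.
  replace (c + h + - h)%C with c in T by ring.
  rewrite Cmod_opp in T; lra. }
assert (ch0 : (c + h)%C <> 0%C).
{ intros E; rewrite E, Cmod_0 in Hch; lra. }
replace (/ (c + h) - / c + h * / (c * c))%C
  with (h * h * / (c * c * (c + h)))%C by (field; auto).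
rewrite !Cmod_mult, Cmod_inv, !Cmod_mult by (repeat apply Cmult_neq_0; auto).
pose proof (Cmod_ge_0 h).
assert (Hden : 0 < Cmod c * Cmod c * (Cmod c / 2)) by (repeat apply Rmult_lt_0_compat; lra).
apply Rle_trans with (Cmod h * Cmod h * / (Cmod c * Cmod c * (Cmod c / 2))).
- apply Rmult_le_compat_l; [nra|].
  apply Rinv_le_contravar; [exact Hden|]; apply Rmult_le_compat_l; nra.
- right; field; lra.
Qed.

Lemma is_derive_Cinv (c : C) : c <> 0%C ->
  is_derive (K := C_AbsRing) (V := AbsRing_NormedModule C_AbsRing)
    Cinv c (- / (c * c))%C.
Proof.
intros c0; split; [apply is_linear_scal_l|].
intros x Hx.
apply (@is_filter_lim_locally_unique _ (AbsRing_NormedModule C_AbsRing)) in Hx; subst x.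
intros eps.
assert (Hc : 0 < Cmod c) by now apply Cmod_gt_0.
set (r := eps * (Cmod c * Cmod c * Cmod c) / 2).
assert (Hr : 0 < r).
{ pose proof (cond_pos eps); unfold r.
  apply Rmult_lt_0_compat; [repeat apply Rmult_lt_0_compat|]; lra. }
assert (Hd : 0 < Rmin (Cmod c / 2) r) by (apply Rmin_pos; lra).
apply (filter_imp (@ball_norm _ (AbsRing_NormedModule C_AbsRing) c (mkposreal _ Hd)));
  [|apply (@locally_ball_norm _ (AbsRing_NormedModule C_AbsRing))].
intros y Hy; change (Cmod (y - c)%C < Rmin (Cmod c / 2) r) in Hy.
change (Cmod (/ y - / c - (y - c) * - / (c * c))%C <= eps * Cmod (y - c)).
set (h := (y - c)%C) in *.
assert (Hh1 : Cmod h <= Cmod c / 2) by (pose proof (Rmin_l (Cmod c / 2) r); lra).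
assert (Hh2 : Cmod h <= r) by (pose proof (Rmin_r (Cmod c / 2) r); lra).
replace y with (c + h)%C by (unfold h; ring).
replace (/ (c + h) - / c - h * - / (c * c))%C
  with (/ (c + h) - / c + h * / (c * c))%C by ring.
eapply Rle_trans; [now apply Cinv_remainder_bound|].
pose proof (Cmod_ge_0 h).
apply Rle_trans with (2 * (Cmod h * r) / (Cmod c * Cmod c * Cmod c)).
- unfold Rdiv; apply Rmult_le_compat_r.
  + left; apply Rinv_0_lt_compat; repeat apply Rmult_lt_0_compat; lra.
  + apply Rmult_le_compat_l; [lra|]; apply Rmult_le_compat_l; lra.
- right; unfold r; field; lra.
Qed.

Definition kernel1 (k : R) (w : C) : C := (k / (w + 1))%C.

Lemma ex_derive_kernel1 (k : R) (z : C) : (z + 1)%C <> 0%C ->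
  ex_derive (K := C_AbsRing) (V := C_NormedModule) (kernel1 k) z.
Proof.
intros z1.
apply (ex_derive_ext (fun w => scal (/ (w + 1))%C (RtoC k))).
{ intros w; apply Cmult_comm. }
apply (ex_derive_scal_l (K := C_AbsRing) (V := C_NormedModule) (fun w => / (w + 1))%C).
apply (ex_derive_comp (K := C_AbsRing) (V := AbsRing_NormedModule C_AbsRing) Cinv).
- exists (- / ((z + 1) * (z + 1)))%C; exact (is_derive_Cinv _ z1).
- eexists; apply (is_derive_plus (K := C_AbsRing) (V := AbsRing_NormedModule C_AbsRing));
    [apply is_derive_id | apply is_derive_const].
Qed.

Lemma Cmod_kernel1_sqr (k u v : R) : 0 < u + 1 ->
  Cmod (kernel1 k (u, v)) * Cmod (kernel1 k (u, v))
  = k * k / ((u + 1) * (u + 1) + v * v).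
Proof.
intros u1.
assert (w1 : ((u, v) + 1)%C <> 0%C) by (intros E; injection E; lra).
assert (0 < Cmod ((u, v) + 1)) by now apply Cmod_gt_0.
unfold kernel1, Cdiv; rewrite Cmod_mult, Cmod_inv by exact w1.
replace (Cmod k * / Cmod ((u, v) + 1) * (Cmod k * / Cmod ((u, v) + 1)))
  with (Cmod k * Cmod k / (Cmod ((u, v) + 1) * Cmod ((u, v) + 1))) by (field; lra).
rewrite !Cmod_sqr; unfold Cplus, RtoC; cbn [fst snd]; f_equal; ring.
Qed.

Lemma affine_mapE (a : R) (b w : C) :
  affine_map a b w = (a * fst w + fst b, a * snd w + snd b).
Proof.
destruct b, w; unfold affine_map, Cplus, Cmult, RtoC; cbn [fst snd]; f_equal; ring.
Qed.

Lemma affine_map_comp (A a : R) (B b w : C) :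
  affine_map A B (affine_map a b w) = affine_map (A * a) (affine_map A B b) w.
Proof. rewrite !affine_mapE; destruct B, b, w; cbn [fst snd]; f_equal; ring. Qed.

Lemma affine_map_id (w : C) : affine_map 1 (0, 0) w = w.
Proof. rewrite affine_mapE; destruct w; cbn [fst snd]; f_equal; ring. Qed.

End complex_kernel.

From mathcomp Require Import all_boot all_order all_algebra.
From mathcomp Require Import all_classical all_reals all_analysis.
From mathcomp Require Import Rstruct ring lra measurable_realfun.
Import Order.TTheory GRing.Theory Num.Theory.
Import numFieldNormedType.Exports.
Local Open Scope classical_set_scope.
Local Open Scope ring_scope.

Section lorentzian_integral.
Context {R : realType}.
Let mu := @lebesgue_measure R.

Let oneDsqrV_ge0 (x : R) : 0 <= (oneDsqr x)^-1.
Proof. by rewrite invr_ge0 (le_trans ler01) // oneDsqr_ge1. Qed.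

Lemma integral_oneDsqrV : (\int[mu]_x ((oneDsqr x)^-1)%:E = pi%:E)%E.
Proof.
rewrite ge0_symfun_integralT.
- by rewrite -set_itvcy integral0y_oneDsqr -EFinM mulrC divfK.
- by [].
- exact: continuous_oneDsqrV.
- by move=> x; rewrite /= /oneDsqr sqrrN.
Qed.

Lemma ge0_integral_affine_comp (G : R -> R) (s t : R) : 0 < s ->
  continuous G -> (forall x, 0 <= G x) ->
  (\int[mu]_y (G (s * y + t) * s)%:E = \int[mu]_y (G y)%:E)%E.
Proof.
move=> s0 cG G0.
pose F y := s * y + t.
have dF (y : R) : is_derive y (1 : R) F s.
  by apply: is_derive_eq; rewrite /GRing.scale /= mulr1 addr0.
have F' : derive1 F = cst s by apply/funext => y; rewrite derive1E derive_val.
have F_linv M : F ((M - t) / s) = M by rewrite /F mulrC divfK ?gt_eqF // subrK.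
rewrite (@increasing_ge0_integration_by_substitutionT _ F G) //; rewrite ?F' //.
- by move=> x y xy; rewrite /F ltrD2r ltr_pM2l.
- exact: cst_continuous.
- exact: is_cvg_cst.
- exact: is_cvg_cst.
- apply/cvgrNyPle => M; exists ((M - t) / s); split; first exact: num_real.
  by move=> x /ltW xM; rewrite -(F_linv M) lerD2r ler_pM2l.
- apply/cvgryPge => M; exists ((M - t) / s); split; first exact: num_real.
  by move=> x /ltW Mx; rewrite -(F_linv M) lerD2r ler_pM2l.
Qed.

Lemma integral_lorentzian (c A d q : R) : 0 <= c -> 0 < A -> 0 < d ->
  (\int[mu]_y (c / (d ^+ 2 + (A * y + q) ^+ 2))%:E = (c * pi / (A * d))%:E)%E.
Proof.
move=> c0 A0 d0.
pose G u := c / (A * d) * (oneDsqr u)^-1.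
have scale y : c / (d ^+ 2 + (A * y + q) ^+ 2) = G (A / d * y + q / d) * (A / d).
  have den0 : d ^+ 2 + (A * y + q) ^+ 2 != 0.
    by rewrite gt_eqF // ltr_pwDl ?sqr_ge0 // exprn_gt0.
  by rewrite /G /oneDsqr; field; rewrite den0 !gt_eqF.
under eq_integral do rewrite scale.
rewrite ge0_integral_affine_comp ?divr_gt0 //.
- under eq_integral do rewrite EFinM.
  rewrite ge0_integralZl.
  + by rewrite integral_oneDsqrV -EFinM mulrAC.
  + exact: measurableT.
  + apply/measurable_EFinP.
    exact: continuous_measurable_fun continuous_oneDsqrV.
  + by move=> x _; rewrite lee_fin.
  + by rewrite lee_fin divr_ge0 // ltW // mulr_gt0.
- by move=> x; apply: (@continuousM _ _ (cst _) (fun u => (oneDsqr u)^-1));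
    [exact: cst_continuous | exact: continuous_oneDsqrV].
- by move=> x; rewrite /G mulr_ge0 // divr_ge0 // ltW // mulr_gt0.
Qed.

End lorentzian_integral.

Definition H2slice (f : CC -> CC) (x : R) : \bar R :=
  ((1 / PI)%:E * \int[@lebesgue_measure R]_(y in setT)
                   (Complex.Cmod (f (x, y)) ^+ 2)%:E)%E.

Lemma H2norm2E (f : CC -> CC) :
  H2norm2 f = ereal_sup (H2slice f @` [set x | 0 < x]).
Proof. by []. Qed.

Lemma H2norm_le1 (f : CC -> CC) : (H2norm2 f <= 1%:E)%E -> H2norm f <= 1.
Proof.
rewrite /H2norm; case: (H2norm2 f) => [r| |] //=.
- by rewrite lee_fin => /RleP/sqrt_le_1_alt; rewrite sqrt_1 => /RleP.
- by rewrite sqrt_0.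
Qed.

Lemma holomorphic_kernel1 (k : R) : holomorphic_rhp (kernel1 k).
Proof.
case=> u v; rewrite /in_rhp /= => u0; apply: ex_derive_kernel1 => /(congr1 fst).
by rewrite /= RplusE => /eqP; rewrite gt_eqF // addr_gt0.
Qed.

Lemma PI_gt0 : 0 < PI :> R.
Proof. exact/RltP/PI_RGT_0. Qed.

(* Mathematically [kappa = 1]: Stdlib's [PI] (in [H2norm2]) and MathComp's [pi]
   (from the arctangent integral) are not identified by the libraries. *)
Definition kappa : R := sqrt (PI / pi).

Lemma kappa_sqr : kappa * kappa = PI / pi.
Proof. by apply: sqrt_sqrt; apply/RleP; rewrite divr_ge0 // ltW // ?PI_gt0 ?pi_gt0. Qed.

Lemma H2slice_kernel1_affine (A p q x : R) : 0 < A -> 0 < A * x + p + 1 ->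
  H2slice (comp_op (affine_map A (p, q)) (kernel1 kappa)) x
  = (1 / (A * (A * x + p + 1)))%:E.
Proof.
move=> A0 d0.
have modulus y : Complex.Cmod (kernel1 kappa (affine_map A (p, q) (x, y))) ^+ 2
    = PI / pi / ((A * x + p + 1) ^+ 2 + (A * y + q) ^+ 2).
  rewrite affine_mapE /= expr2 -RmultE Cmod_kernel1_sqr; last exact/RltP.
  by rewrite RdivE !RplusE !RmultE kappa_sqr -!expr2.
rewrite /H2slice /comp_op.
under eq_integral do rewrite modulus.
rewrite integral_lorentzian // -?EFinM; last by rewrite divr_ge0 // ltW // ?PI_gt0 ?pi_gt0.
by rewrite divfK ?gt_eqF ?pi_gt0 // !mul1r mulrA mulVf ?gt_eqF ?PI_gt0 // mul1r.
Qed.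

Lemma H2norm2_kernel1_affine_le1 (A : R) (B : CC) : 1 <= A -> 0 <= fst B ->
  (H2norm2 (comp_op (affine_map A B) (kernel1 kappa)) <= 1%:E)%E.
Proof.
move=> A1; have A0 : 0 < A := lt_le_trans ltr01 A1.
case: B => p q /= p0.
rewrite H2norm2E; apply: ge_ereal_sup => _ [x /= x0 <-].
have d1 : 1 <= A * x + p + 1 by rewrite lerDr addr_ge0 // mulr_ge0 // ltW.
rewrite H2slice_kernel1_affine ?(lt_le_trans ltr01 d1) // lee_fin div1r.
by rewrite invf_le1 ?mulr_ege1 // mulr_gt0 // (lt_le_trans ltr01 d1).
Qed.

Lemma H2norm2_kernel1 : H2norm2 (kernel1 kappa) = 1%:E.
Proof.
have -> : kernel1 kappa = comp_op (affine_map 1 (0, 0)) (kernel1 kappa).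
  by apply: funext => w; rewrite /comp_op affine_map_id.
apply/le_anti; rewrite H2norm2_kernel1_affine_le1 //=.
(* the slice at [x = e] is [1 / (e + 1) >= 1 - e] *)
apply/lee_subgt0Pr => e e0; apply: le_ereal_sup_tmp.
exists (H2slice (comp_op (affine_map 1 (0, 0)) (kernel1 kappa)) e); first by exists e.
rewrite H2slice_kernel1_affine ?mul1r ?addr0 ?ltr_pwDl // -EFinB lee_fin.
by rewrite -div1r ler_pdivlMr ?ltr_pwDl //; nra.
Qed.

Lemma kernel1_unit_sphere : in_H2 (kernel1 kappa) /\ H2norm (kernel1 kappa) = 1.
Proof.
split; first split.
- exact: holomorphic_kernel1.
- by rewrite H2norm2_kernel1 ltry.
- by rewrite /H2norm H2norm2_kernel1 /= sqrt_1.
Qed.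

Lemma iter_comp_op (phi : CC -> CC) (f : CC -> CC) (n : nat) :
  iter n (comp_op phi) f = comp_op (iter n phi) f.
Proof.
elim: n => [|n IH] //=.
by rewrite IH; apply: funext => w; rewrite /comp_op iterSr.
Qed.

Lemma iter_affine_map (a : R) (b : CC) (n : nat) : 0 <= a -> 0 <= fst b ->
  exists2 B : CC, 0 <= fst B & iter n (affine_map a b) = affine_map (a ^+ n) B.
Proof.
move=> a0 b0; elim: n => [|n [B B0 IH]].
  by exists (0, 0) => //; apply: funext => w; rewrite affine_map_id.
exists (affine_map a b B); first by rewrite affine_mapE /= addr_ge0 // mulr_ge0.
by apply: funext => w; rewrite iterS IH affine_map_comp exprS.
Qed.

Lemma H2norm_iter_kernel1_le1 (a : R) (b : CC) (n : nat) : 1 <= a -> 0 <= fst b ->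
  H2norm (iter n (comp_op (affine_map a b)) (kernel1 kappa)) <= 1.
Proof.
move=> a1 b0; have a0 : 0 <= a := le_trans ler01 a1.
rewrite iter_comp_op; have [B B0 ->] := iter_affine_map _ _ n a0 b0.
by apply/H2norm_le1/H2norm2_kernel1_affine_le1; rewrite ?exprn_ege1.
Qed.

(* Re-importing [Reals] rebinds the [%R] key to Stdlib's [R_scope], as in the statement. *)
From Stdlib Require Import Reals.

Theorem proposition3p4 (a : R) (b : Complex.C) :
  (0 < a)%R -> (0 <= fst b)%R -> (a = 1%R \/ (1 < a)%R) ->
  ~ positively_expansive (comp_op (affine_map a b)) /\
  ~ uniformly_positively_expansive (comp_op (affine_map a b)).
Proof.
move=> _ /RleP b0 a_ge1.
have a1 : 1 <= a by case: a_ge1 => [->|/RltP/ltW].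
have [f_H2 f_norm] := kernel1_unit_sphere.
have small n := H2norm_iter_kernel1_le1 _ _ n a1 b0.
split => [expansive | [n [_ expansive]]].
- have [n [_ big]] := expansive _ f_H2 f_norm.
  by have := le_trans big (small n); rewrite lern1.
- have big := expansive _ f_H2 f_norm.
  by have := le_trans big (small n); rewrite lern1.
Qed.
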